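(* Let $\Lambda$ be an artin algebra, $n\ge 2$, and let $f=\{f^i\}_{i=1}^n\colon X\to Y$ be an irreducible morphism in $\mathbf{C_n}({\rm proj}\,\Lambda)$. If $f$ is not an epimorphism (in the category of complexes of $\Lambda$-modules) and ${\rm Im}\,f^i\in{\rm proj}\,\Lambda$ for all $1\le i\le n$, then $f$ is a monomorphism. Consequently, if $\Lambda=H$ is a hereditary artin algebra, every irreducible morphism in $\mathbf{C_n}({\rm proj}\,H)$ is either a monomorphism or an epimorphism.
   Context: For an artin algebra $\Lambda$ and $n\ge 2$, $\mathbf{C_n}({\rm proj}\,\Lambda)$ is the full subcategory of the category of complexes of finitely generated right $\Lambda$-modules consisting of complexes $X=(X^i,d^i_X)$ with $X^i$ projective for all $i$ and $X^i=0$ for $i\notin\{1,\dots,n\}$; morphisms are chain maps $f=\{f^i\}$. Kernels, cokernels, images, monomorphisms and epimorphisms are taken degreewise in the category $\mathbf{C_n}({\rm mod}\,\Lambda)$ of complexes of finitely generated modules concentrated in degrees $1,\dots,n$. A morphism $f$ in $\mathbf{C_n}({\rm proj}\,\Lambda)$ is irreducible if it is neither a section nor a retraction in $\mathbf{C_n}({\rm proj}\,\Lambda)$, and whenever $f=gh$ in $\mathbf{C_n}({\rm proj}\,\Lambda)$, $h$ is a section or $g$ is a retraction. *)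

(* Right Lambda-modules are left modules over the converse
   ring Lambda^c (lmodType (Lambda^c)). *)
From HB Require Import structures.
From mathcomp Require Import all_boot all_order all_algebra.
Set Implicit Arguments. Unset Strict Implicit. Unset Printing Implicit Defensive.
Import GRing.Theory.
Local Open Scope ring_scope.

Definition is_ideal (R : comNzRingType) (I : R -> Prop) : Prop :=
  I 0 /\ (forall x y, I x -> I y -> I (x + y)) /\ (forall r x, I x -> I (r * x)).

Definition artinian_ring (R : comNzRingType) : Prop :=
  forall I : nat -> R -> Prop,
    (forall k, is_ideal (I k)) ->
    (forall k x, I k.+1 x -> I k x) ->
    exists N, forall k, (N <= k)%N -> forall x, I k x <-> I N x.

Definition artin_algebra (L : nzRingType) : Prop :=
  exists (R : comNzRingType) (phi : {rmorphism R -> L}),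
    (forall r x, phi r * x = x * phi r) /\ artinian_ring R /\
    exists s : seq L, forall x : L, exists c : seq R,
      x = \sum_(i < size s) phi c`_i * s`_i.

Definition fin_gen (L : nzRingType) (M : lmodType L^c) : Prop :=
  exists s : seq M, forall m : M, exists c : seq L^c,
    m = \sum_(i < size s) c`_i *: s`_i.

(* projective object of mod Lambda: lifting property against epimorphisms
   between finitely generated modules *)
Definition projective (L : nzRingType) (M : lmodType L^c) : Prop :=
  forall (N N' : lmodType L^c), fin_gen N -> fin_gen N' ->
  forall g : {linear N -> N'}, (forall y, exists x, g x = y) ->
  forall h : {linear M -> N'}, exists k : {linear M -> N}, forall m, g (k m) = h m.

Definition in_proj (L : nzRingType) (M : lmodType L^c) : Prop :=
  fin_gen M /\ projective M.

Definition hereditary (L : nzRingType) : Prop :=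
  forall (M P : lmodType L^c), fin_gen M -> in_proj P ->
  forall j : {linear M -> P}, injective j -> projective M.

(* cochain complexes X^1 -> X^2 -> ... -> X^n with d^i : X^i -> X^{i+1},
   X^i = 0 for i outside {1..n}, every X^i in proj Lambda *)
Record cplx (L : nzRingType) (n : nat) := Cplx {
  obj : nat -> lmodType L^c;
  dif : forall i, {linear obj i -> obj i.+1};
  dif_dif : forall i (x : obj i), dif i.+1 (dif i x) = 0;
  obj_vanish : forall i, (i = 0%N \/ (n < i)%N) -> forall x : obj i, x = 0;
  obj_proj : forall i, (1 <= i <= n)%N -> in_proj (obj i)
}.

Record cmap (L : nzRingType) (n : nat) (X Y : cplx L n) := Cmap {
  cm : forall i, {linear obj X i -> obj Y i};
  cm_comm : forall i (x : obj X i), cm i.+1 (dif X i x) = dif Y i (cm i x)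
}.

Definition is_section (L : nzRingType) (n : nat) (X Y : cplx L n)
  (f : cmap X Y) : Prop :=
  exists g : cmap Y X, forall i (x : obj X i), cm g i (cm f i x) = x.

Definition is_retraction (L : nzRingType) (n : nat) (X Y : cplx L n)
  (f : cmap X Y) : Prop :=
  exists g : cmap Y X, forall i (y : obj Y i), cm f i (cm g i y) = y.

Definition irreducible (L : nzRingType) (n : nat) (X Y : cplx L n)
  (f : cmap X Y) : Prop :=
  ~ is_section f /\ ~ is_retraction f /\
  forall (Z : cplx L n) (h : cmap X Z) (g : cmap Z Y),
    (forall i (x : obj X i), cm f i x = cm g i (cm h i x)) ->
    is_section h \/ is_retraction g.

Definition cmono (L : nzRingType) (n : nat) (X Y : cplx L n) (f : cmap X Y) :=
  forall i, (1 <= i <= n)%N -> injective (cm f i).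

Definition cepi (L : nzRingType) (n : nat) (X Y : cplx L n) (f : cmap X Y) :=
  forall i, (1 <= i <= n)%N -> forall y : obj Y i, exists x, cm f i x = y.

(* Im f^i in proj Lambda: the image (given by an epi-mono factorization
   of f^i, which determines it up to isomorphism) lies in proj Lambda *)
Definition image_in_proj (L : nzRingType) (M N : lmodType L^c)
  (f : {linear M -> N}) : Prop :=
  exists (I : lmodType L^c) (p : {linear M -> I}) (j : {linear I -> N}),
    (forall y, exists x, p x = y) /\ injective j /\
    (forall x, j (p x) = f x) /\ in_proj I.

(* Degreewise, f^i factors as X^i ->> Im f^i >-> Y^i, and the differentials of Y
   restrict to the images, so f factors as X -> Z -> Y through the image complex Z,
   with X -> Z degreewise epi and Z -> Y degreewise mono.  When the images are
   projective, Z lies in C_n(proj Lambda), and irreducibility of f forces X -> Z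
   to be a section (then f is mono) or Z -> Y to be a retraction (then f is epi).
   Over a hereditary algebra the images are submodules of projectives, hence
   projective, so the hypothesis on images holds automatically. *)
From Stdlib Require Import ClassicalEpsilon.
From HB Require Import structures.
From mathcomp Require Import all_boot all_order all_algebra.
Set Implicit Arguments. Unset Strict Implicit. Unset Printing Implicit Defensive.
Import GRing.Theory.
Local Open Scope ring_scope.

Section LinearLift.
Variables (R : pzRingType) (A B C : lmodType R).
Variables (j : {linear A -> B}) (g : {linear C -> B}).
Hypothesis j_inj : injective j.
Hypothesis g_in_image : forall c, exists a, j a = g c.

Definition lift_fun (c : C) : A :=
  proj1_sig (constructive_indefinite_description _ (g_in_image c)).

Lemma lift_funK c : j (lift_fun c) = g c.
Proof. exact: proj2_sig (constructive_indefinite_description _ (g_in_image c)). Qed.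

Fact lift_fun_is_linear : linear lift_fun.
Proof. by move=> a u v; apply: j_inj; rewrite linearP !lift_funK linearP. Qed.

HB.instance Definition _ :=
  GRing.isLinear.Build R C A *:%R lift_fun lift_fun_is_linear.

Definition lift : {linear C -> A} := lift_fun.

Lemma liftK c : j (lift c) = g c. Proof. exact: lift_funK. Qed.

End LinearLift.

Record epi_mono_factorization (R : pzRingType) (M N : lmodType R)
    (f : {linear M -> N}) := EpiMonoFactorization {
  fact_obj : lmodType R;
  fact_epi : {linear M -> fact_obj};
  fact_mono : {linear fact_obj -> N};
  fact_epi_surj : forall y, exists x, fact_epi x = y;
  fact_mono_inj : injective fact_mono;
  fact_monoK : forall x, fact_mono (fact_epi x) = f x
}.
Arguments fact_epi_surj {R M N f} e y.
Arguments fact_mono_inj {R M N f} e [x1 x2].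
Arguments fact_monoK {R M N f} e x.

Section Image.
Variables (R : pzRingType) (M N : lmodType R) (f : {linear M -> N}).

Definition in_image (y : N) : bool :=
  if excluded_middle_informative (exists x, f x = y) then true else false.

Lemma in_imageP y : reflect (exists x, f x = y) (in_image y).
Proof. by rewrite /in_image; case: excluded_middle_informative; constructor. Qed.

Fact in_image_submod_closed : subsemimod_closed in_image.
Proof.
split; first split.
- by apply/in_imageP; exists 0; rewrite linear0.
- move=> _ _ /in_imageP[x <-] /in_imageP[y <-].
  by apply/in_imageP; exists (x + y); rewrite linearD.
- move=> a _ /in_imageP[x <-].
  by apply/in_imageP; exists (a *: x); rewrite linearZ.
Qed.

HB.instance Definition _ :=
  GRing.isSubmodClosed.Build R N in_image in_image_submod_closed.

Definition image := {y : N | in_image y}.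
HB.instance Definition _ := Choice.on image.
HB.instance Definition _ := SubType.on image.
HB.instance Definition _ := [SubChoice_isSubLmodule of image by <:].

Definition image_corestr_fun (x : M) : image :=
  exist _ (f x) (introT (in_imageP _) (ex_intro _ x erefl)).

Fact image_corestr_is_linear : linear image_corestr_fun.
Proof. by move=> a u v; apply: val_inj; rewrite /= linearP. Qed.

HB.instance Definition _ :=
  GRing.isLinear.Build R M image *:%R image_corestr_fun image_corestr_is_linear.

Definition image_incl_fun (y : image) : N := val y.

Fact image_incl_is_linear : linear image_incl_fun.
Proof. by []. Qed.

HB.instance Definition _ :=
  GRing.isLinear.Build R image N *:%R image_incl_fun image_incl_is_linear.

Lemma image_corestr_surj (y : image) : exists x, image_corestr_fun x = y.
Proof. by case: y => y fy; have /in_imageP[x fx] := fy; exists x; apply: val_inj. Qed.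

Definition image_factorization : epi_mono_factorization f :=
  @EpiMonoFactorization R M N f image image_corestr_fun image_incl_fun
    image_corestr_surj val_inj (fun => erefl).

End Image.

Lemma fin_gen_surj (L : nzRingType) (M N : lmodType L^c) (p : {linear M -> N}) :
  (forall y, exists x, p x = y) -> fin_gen M -> fin_gen N.
Proof.
move=> p_surj [s gen_s]; exists (map p s) => y.
have [x <-] := p_surj y; have [c ->] := gen_s x.
exists c; rewrite linear_sum size_map; apply: eq_bigr => i _.
by rewrite linearZ (nth_map 0).
Qed.

Lemma hereditary_image_in_proj (L : nzRingType) (M N : lmodType L^c)
    (f : {linear M -> N}) :
  hereditary L -> fin_gen M -> in_proj N -> image_in_proj f.
Proof.
move=> her fgM projN; set F := image_factorization f.
have fgI : fin_gen (fact_obj F) := fin_gen_surj (fact_epi_surj F) fgM.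
exists (fact_obj F), (fact_epi F), (fact_mono F).
split; first exact: fact_epi_surj.
split; first exact: fact_mono_inj.
split; first exact: fact_monoK.
by split; last exact: her fgI projN _ (fact_mono_inj F).
Qed.

Section ImageComplex.
Variables (L : nzRingType) (n : nat) (X Y : cplx L n) (f : cmap X Y).
Variable F : forall i, epi_mono_factorization (cm f i).
Hypothesis F_proj : forall i, (1 <= i <= n)%N -> in_proj (fact_obj (F i)).

Lemma dif_maps_into_image i (y : fact_obj (F i)) :
  exists z, fact_mono (F i.+1) z = (dif Y i \o fact_mono (F i)) y.
Proof.
have [x <-] := fact_epi_surj (F i) y.
by exists (fact_epi (F i.+1) (dif X i x)); rewrite /= !fact_monoK cm_comm.
Qed.

Definition image_dif i := lift (fact_mono_inj (F i.+1)) (@dif_maps_into_image i).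

Lemma image_difK i y :
  fact_mono (F i.+1) (image_dif i y) = dif Y i (fact_mono (F i) y).
Proof. exact: liftK. Qed.

Lemma image_dif_dif i (y : fact_obj (F i)) : image_dif i.+1 (image_dif i y) = 0.
Proof. by apply: (fact_mono_inj (F i.+2)); rewrite !image_difK dif_dif !linear0. Qed.

Lemma image_obj_vanish i :
  (i = 0%N \/ (n < i)%N) -> forall y : fact_obj (F i), y = 0.
Proof.
move=> out_i y; have [x <-] := fact_epi_surj (F i) y.
by rewrite (obj_vanish out_i x) linear0.
Qed.

Definition image_cplx : cplx L n := Cplx image_dif_dif image_obj_vanish F_proj.

Lemma image_epi_comm i (x : obj X i) :
  fact_epi (F i.+1) (dif X i x) = image_dif i (fact_epi (F i) x).
Proof.
by apply: (fact_mono_inj (F i.+1)); rewrite image_difK !fact_monoK cm_comm.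
Qed.

Definition image_epi : cmap X image_cplx :=
  @Cmap L n X image_cplx (fun i => fact_epi (F i)) image_epi_comm.

Definition image_mono : cmap image_cplx Y :=
  @Cmap L n image_cplx Y (fun i => fact_mono (F i)) image_difK.

End ImageComplex.

Lemma irreducible_factor_mono_or_epi (L : nzRingType) (n : nat) (X Y Z : cplx L n)
    (f : cmap X Y) (h : cmap X Z) (g : cmap Z Y) :
  irreducible f -> (forall i x, cm f i x = cm g i (cm h i x)) ->
  (forall i y, exists x, cm h i x = y) -> (forall i, injective (cm g i)) ->
  cmono f \/ cepi f.
Proof.
move=> [_ [_ irr_f]] f_gh h_surj g_inj.
case: (irr_f Z h g f_gh) => [[r rh] | [s gs]].
- left=> i _ x1 x2; rewrite !f_gh => /g_inj h12.
  by rewrite -(rh i x1) -(rh i x2) h12.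
- right=> i _ y; have [x hx] := h_surj i (cm s i y).
  by exists x; rewrite f_gh hx gs.
Qed.

Lemma irreducible_mono_or_epi (L : nzRingType) (n : nat) (X Y : cplx L n)
    (f : cmap X Y) :
  irreducible f -> (forall i, (1 <= i <= n)%N -> image_in_proj (cm f i)) ->
  cmono f \/ cepi f.
Proof.
move=> irr_f im_proj.
have factor i : exists F : epi_mono_factorization (cm f i),
    (1 <= i <= n)%N -> in_proj (fact_obj F).
  case: (boolP (1 <= i <= n)%N) => [in_i | out_i]; last first.
    by exists (image_factorization (cm f i)) => in_i; case/negP: out_i.
  have [I [p [j [p_surj [j_inj [jpK projI]]]]]] := im_proj i in_i.
  by exists (EpiMonoFactorization p_surj j_inj jpK).
pose F i := proj1_sig (constructive_indefinite_description _ (factor i)).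
have F_proj i : (1 <= i <= n)%N -> in_proj (fact_obj (F i)).
  exact: proj2_sig (constructive_indefinite_description _ (factor i)).
apply: (irreducible_factor_mono_or_epi irr_f (h := image_epi F_proj)
          (g := image_mono F_proj)) => [i x | i | i] /=.
- by rewrite fact_monoK.
- exact: fact_epi_surj.
- exact: fact_mono_inj.
Qed.

Theorem proposition2p4 (L : nzRingType) (n : nat) :
  artin_algebra L -> (2 <= n)%N ->
  (forall (X Y : cplx L n) (f : cmap X Y),
     irreducible f -> ~ cepi f ->
     (forall i, (1 <= i <= n)%N -> image_in_proj (cm f i)) ->
     cmono f) /\
  (hereditary L ->
   forall (X Y : cplx L n) (f : cmap X Y),
     irreducible f -> cmono f \/ cepi f).
Proof.
move=> _ _; split=> [X Y f irr_f not_epi im_proj | her X Y f irr_f].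
  by case: (irreducible_mono_or_epi irr_f im_proj) => // /not_epi.
apply: irreducible_mono_or_epi irr_f _ => i in_i.
exact: hereditary_image_in_proj her (obj_proj X in_i).1 (obj_proj Y in_i).
Qed.
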